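(* For any $\theta_0=(\gamma_0,\mu_0,\sigma_0)\in(-1/2,\infty)\times\mathbb{R}\times(0,\infty)$, the three-parameter GEV family satisfies \[P_{\theta_0}\big(\mathbb{R}\setminus\bar S(\varepsilon)\big)=o(\varepsilon^2),\qquad\varepsilon\downarrow0.\]
   Context: $P_\theta$, $\theta=(\gamma,\mu,\sigma)\in\Theta=\mathbb{R}\times\mathbb{R}\times(0,\infty)$, is the GEV distribution with Lebesgue density $p_\theta(x)=\sigma^{-1}e^{-u}u^{\gamma+1}\mathbf 1(1+\gamma z>0)$, $z=(x-\mu)/\sigma$, $u=(1+\gamma z)^{-1/\gamma}$ for $\gamma\ne0$, $u=e^{-z}$ for $\gamma=0$. Its support is $S_\theta=\{x:\sigma+\gamma(x-\mu)>0\}$. $U_\varepsilon(\theta_0)=\{\theta\in\Theta:\|\theta-\theta_0\|<\varepsilon\}$ and $\bar S(\varepsilon)=\bigcap_{\theta\in U_\varepsilon(\theta_0)}S_\theta$. *)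

From HB Require Import structures.
From mathcomp Require Import all_boot all_order all_algebra.
From mathcomp Require Import all_classical all_reals all_analysis.
Set Implicit Arguments. Unset Strict Implicit. Unset Printing Implicit Defensive.
Import Order.TTheory GRing.Theory Num.Theory.
Local Open Scope classical_set_scope.
Local Open Scope ring_scope.

Section GEV.
Variable R : realType.

Definition gev_density (g m s x : R) : R :=
  let z := (x - m) / s in
  if 0 < 1 + g * z then
    let u := if g == 0 then expR (- z) else (1 + g * z) `^ (- g^-1) in
    s^-1 * expR (- u) * u `^ (g + 1)
  else 0.

Definition gev_prob (g m s : R) (A : set R) : \bar R :=
  (\int[lebesgue_measure]_(x in A) (gev_density g m s x)%:E)%E.

Definition gev_support (g m s : R) : set R := [set x | 0 < s + g * (x - m)].

Definition param_dist (g m s g0 m0 s0 : R) : R :=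
  Num.sqrt ((g - g0) ^+ 2 + (m - m0) ^+ 2 + (s - s0) ^+ 2).

Definition Sbar (g0 m0 s0 eps : R) : set R :=
  [set x | forall g m s : R, 0 < s -> param_dist g m s g0 m0 s0 < eps ->
           gev_support g m s x].

End GEV.

From HB Require Import structures.
From mathcomp Require Import all_boot all_order all_algebra.
From mathcomp Require Import all_classical all_reals all_analysis.
From mathcomp Require Import ring lra.
From mathcomp Require Import measurable_realfun.
Set Implicit Arguments.
Unset Strict Implicit.
Unset Printing Implicit Defensive.
Import Order.TTheory GRing.Theory Num.Theory.
Local Open Scope classical_set_scope.
Local Open Scope ring_scope.

(* A parameter within distance eps of theta0 moves the support term
   s + g (x - m) by at most eps (2 + |g0| + |x - m0|) when eps <= 1, so the
   complement of Sbar(eps) only meets the support of P_theta0 where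
   s0 + g0 (x - m0) = O(eps (1 + |x - m0|)).
   If g0 <> 0 this is an O(eps)-neighbourhood of the endpoint m0 - s0/g0, on
   which w = 1 + g0 (x - m0)/s0 is O(eps) and the density is O(w^p) with
   p > 1 (p = 2 for g0 > 0, where the density is flat at the endpoint, and
   p = -1/g0 - 1 for -1/2 < g0 < 0); the mass is O(eps^(1+p)).
   If g0 = 0 it is the region |x - m0| >= s0/eps - 2, whose Gumbel mass is
   O(exp(-1/(2 eps))). *)

Section nonneg_integral.
Context d (T : measurableType d) (R : realType) (mu : measure T R).

(* No measurability is needed: the integral of a nonnegative function is a
   supremum over the simple functions below it. *)
Lemma le_ge0_integralT (F G : T -> \bar R) :
  (forall x, (0 <= F x)%E) -> (forall x, (F x <= G x)%E) ->
  (\int[mu]_x F x <= \int[mu]_x G x)%E.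
Proof.
move=> F0 FG.
have G0 x : (0 <= G x)%E by exact: le_trans (F0 x) (FG x).
rewrite (ge0_integralTE mu F0) (ge0_integralTE mu G0).
apply: ereal_sup_le => _ [h hF <-]; exists h => //.
by move=> x; exact: le_trans (hF x) (FG x).
Qed.

End nonneg_integral.

Section real_bounds.
Variable R : realType.

Lemma pow_le_expR (N : nat) (u : R) : (0 < N)%N -> 0 <= u ->
  u ^+ N <= N%:R ^+ N * expR u.
Proof.
move=> N0 u0.
have NR : (0 : R) < N%:R by rewrite ltr0n.
have -> : expR u = expR (u / N%:R) ^+ N.
  by rewrite -expRM_natl mulrC divfK // gt_eqF.
rewrite -exprMn; apply: lerXn2r; rewrite ?nnegrE //.
apply: (@le_trans _ _ (N%:R * (u / N%:R))); first by rewrite mulrC divfK // gt_eqF.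
have := expR_ge1Dx (u / N%:R); have : 0 <= u / N%:R by rewrite divr_ge0 // ltW.
by rewrite ler_pM2l //; lra.
Qed.

Lemma powR_mul_expRN_bounded (a : R) : 0 <= a ->
  exists2 K : R, 0 < K & forall u : R, 0 < u -> u `^ a * expR (- u) <= K.
Proof.
move=> a0; pose N := (Num.truncn a).+1.
have aN : a < N%:R by rewrite -truncn_lt_nat.
have NN0 : 0 <= N%:R ^+ N :> R by rewrite exprn_ge0.
exists (1 + N%:R ^+ N); first by lra.
move=> u u0; have [u1|u1] := leP u 1.
- have h1 : u `^ a <= 1 by rewrite -(powRr0 u); apply: ger_powR => //; rewrite u0.
  have h2 : expR (- u) <= 1 by rewrite -expR0 ler_expR; lra.
  suff : u `^ a * expR (- u) <= 1 by lra.
  by rewrite -(mulr1 1) ler_pM // powR_ge0.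
- have h1 : u `^ a <= u ^+ N.
    by rewrite -powR_mulrn; [apply: ler_powR; apply: ltW | apply: ltW].
  have h2 := @pow_le_expR N u (ltn0Sn _) (ltW u0).
  have : u `^ a * expR (- u) <= N%:R ^+ N * expR u * expR (- u).
    by apply: ler_wpM2r; [exact/ltW/expR_gt0 | exact: le_trans h1 h2].
  by rewrite -mulrA -expRD subrr expR0 mulr1; lra.
Qed.

Lemma expRN_le_cube (t : R) : 0 < t -> expR (- t) <= 27 / t ^+ 3.
Proof.
move=> t0; have h := @pow_le_expR 3 t isT (ltW t0).
rewrite expRN ler_pdivlMr ?exprn_gt0 // mulrC ler_pdivrMr; last exact: expR_gt0.
by rewrite -natrX in h.
Qed.

Lemma gumbel_kernel_le (z : R) :
  expR (- expR (- z)) * expR (- z) <= 4 * expR (- `|z|).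
Proof.
set v := expR (- z); have v0 : 0 < v by exact: expR_gt0.
have [z0|z0] := leP 0 z.
- have h : expR (- v) <= 1 by rewrite -expR0 ler_expR oppr_le0 ltW.
  have := ler_wpM2r (ltW v0) h.
  by rewrite ger0_norm // -/v mul1r; lra.
- have v2 : v ^+ 2 * expR (- v) <= 4.
    have := ler_wpM2r (ltW (expR_gt0 (- v))) (@pow_le_expR 2 v isT (ltW v0)).
    by rewrite -[_ * expR v * _]mulrA -expRD subrr expR0 mulr1 -natrX.
  rewrite ltr0_norm // opprK -[expR z]invrK -expRN -/v.
  have -> : expR (- v) * v = v ^+ 2 * expR (- v) / v by field; rewrite gt_eqF.
  by rewrite ler_pM2r // invr_gt0.
Qed.

Lemma littleo_sq_of_powR (P : R -> \bar R) (eps0 D p : R) :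
  0 < eps0 -> 0 < D -> 0 < p ->
  (forall eps, 0 < eps -> eps < eps0 ->
    (P eps <= (D * eps `^ p * eps ^+ 2)%:E)%E) ->
  forall eta, 0 < eta -> exists delta, 0 < delta /\
    forall eps, 0 < eps -> eps < delta -> (P eps <= (eta * eps ^+ 2)%:E)%E.
Proof.
move=> e0 D0 p0 HP eta eta0.
pose r := (eta / D) `^ p^-1.
have r0 : 0 < r by rewrite powR_gt0 // divr_gt0.
exists (Num.min eps0 r); split; first by rewrite lt_min e0 r0.
move=> eps e_gt0; rewrite lt_min => /andP[eeps0 er].
apply: le_trans (HP _ e_gt0 eeps0) _; rewrite lee_fin ler_pM2r ?exprn_gt0 //.
have : eps `^ p < r `^ p.
  by apply: gt0_ltr_powR; rewrite ?nnegrE ?(ltW e_gt0) ?(ltW r0).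
rewrite /r -powRrM mulVf ?gt_eqF // powRr1 => [h|]; last exact/ltW/divr_gt0.
by rewrite mulrC -ler_pdivlMr //; exact: ltW.
Qed.

End real_bounds.

Section lebesgue_integrals.
Import numFieldNormedType.Exports.
Variable R : realType.

Lemma integral_indicator_itv (lo hi c : R) : lo <= hi -> 0 <= c ->
  (\int[lebesgue_measure]_x (((fun=> c%:E) \_ [set` `[lo, hi]]) x)
   = (c * (hi - lo))%:E)%E.
Proof.
move=> lohi c0; rewrite -integral_mkcond integral_cst /=; last exact: measurable_itv.
rewrite lebesgue_measure_itv /= lte_fin.
case: (ltP lo hi) => h; first by rewrite -EFinD -EFinM.
have -> : hi = lo by apply/eqP; rewrite eq_le h lohi.
by rewrite subrr mulr0 mule0.
Qed.

Lemma integral_laplace_le (c A : R) : 0 < c -> 0 <= A ->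
  (\int[lebesgue_measure]_x ((A * expR (- (`|x| / c)))%:E) <= (2 * (A * c))%:E)%E.
Proof.
move=> c0 A0.
pose f (x : R) : R := A * expR (- (`|x| / c)).
have f0 (x : R) : 0 <= f x by rewrite mulr_ge0 // ltW // expR_gt0.
have cf : continuous f.
  move=> x; apply: (@continuousM R R (fun=> A) (fun x => expR (- (`|x| / c))));
    first exact: cst_continuous.
  apply: (@continuous_comp _ _ _ (fun x : R => - (`|x| / c)) expR); last exact: continuous_expR.
  apply: (@continuousN R R^o R (fun x : R => `|x| / c)).
  by apply: (@continuousM R R (fun x : R => `|x|) (fun=> c^-1));
    [exact: norm_continuous | exact: cst_continuous].
have ef : f =1 f \o -%R by move=> x; rewrite /f /= normrN.
rewrite (ge0_symfun_integralT f0 cf ef) /f.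
have mD : measurable [set x : R | 0 <= x] by rewrite -set_itvcy.
under eq_integral => x.
  rewrite inE /= => x0.
  have -> : A * expR (- (`|x| / c)) = (A * c) * exponential_pdf c^-1 x.
    rewrite exponential_pdfE // ger0_norm // mulNr (mulrC c^-1 x).
    by field; rewrite gt_eqF.
  rewrite EFinM.
  over.
rewrite ge0_integralZl_EFin //; last 3 first.
- by move=> x _; rewrite lee_fin exponential_pdf_ge0 // invr_ge0 ltW.
- by apply/measurable_EFinP; apply: measurable_funS (measurable_exponential_pdf _).
- by rewrite mulr_ge0 // ltW.
have pdf_le1 : (\int[lebesgue_measure]_(x in [set x : R | (0 <= x)%R])
                 (exponential_pdf c^-1 x)%:E <= 1)%E.
  rewrite integral_mkcond -(integral_exponential_pdf (rate := c^-1)); last by rewrite invr_gt0.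
  apply: le_ge0_integralT => x; rewrite patchE; case: ifP => _ //;
    by rewrite lee_fin exponential_pdf_ge0 // invr_ge0 ltW.
have Ac0 : (0 <= (A * c)%:E)%E by rewrite lee_fin mulr_ge0 // ltW.
rewrite [leRHS]EFinM; apply: lee_wpmul2l => //.
by rewrite -[leRHS]mule1; exact: lee_wpmul2l.
Qed.

End lebesgue_integrals.

Section gev_parameter_ball.
Variables (R : realType) (g0 m0 s0 : R).

Lemma param_dist_ge (g m s : R) :
  [/\ `|g - g0| <= param_dist g m s g0 m0 s0,
      `|m - m0| <= param_dist g m s g0 m0 s0 &
      `|s - s0| <= param_dist g m s g0 m0 s0].
Proof.
have le_sqrt (a t : R) : a ^+ 2 <= t -> `|a| <= Num.sqrt t.
  by move=> b0; rewrite -sqrtr_sqr ler_wsqrtr.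
have := sqr_ge0 (g - g0); have := sqr_ge0 (m - m0); have := sqr_ge0 (s - s0).
by move=> *; split; apply: le_sqrt; lra.
Qed.

(* Moving from theta0 to theta changes s + g (x - m) by
   (s - s0) + (g - g0) (x - m0) - g (m - m0), each term of size O(eps). *)
Lemma not_Sbar_margin (eps x : R) : 0 < eps -> eps <= 1 ->
  ~ Sbar g0 m0 s0 eps x -> s0 + g0 * (x - m0) <= eps * (2 + `|g0| + `|x - m0|).
Proof.
move=> e0 e1 nS; rewrite leNgt; apply/negP => hx; apply: nS => g m s _ hd.
have [dg dm ds] := param_dist_ge g m s.
have hg : `|g - g0| <= eps by exact/ltW/(le_lt_trans dg).
have hm : `|m - m0| <= eps by exact/ltW/(le_lt_trans dm).
have hs : `|s - s0| <= eps by exact/ltW/(le_lt_trans ds).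
have mul_ge (a b e : R) : `|a| <= e -> - (e * `|b|) <= a * b.
  move=> ha; rewrite lerNl; apply: le_trans (ler_norm _) _.
  by rewrite normrN normrM ler_wpM2r.
have ds0 : - eps <= s - s0 by move: hs; rewrite ler_norml => /andP[].
have dgx := mul_ge _ (x - m0) _ hg.
have dmg := mul_ge (- (m - m0)) g eps ltac:(by rewrite normrN).
have ng : eps * `|g| <= eps * (`|g0| + 1).
  rewrite ler_wpM2l ?ltW //.
  by have := ler_normD g0 (g - g0); rewrite addrCA subrr addr0; lra.
rewrite /gev_support /=.
have -> : s + g * (x - m) = s0 + g0 * (x - m0) + (s - s0) + (g - g0) * (x - m0)
                            - (m - m0) * g by ring.
lra.
Qed.

End gev_parameter_ball.

(* The factor e^(-u) u^(g+1) of the density, as a function of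
   w = 1 + g (x - m)/s, where u = w^(-1/g). *)
Definition gev_kernel {R : realType} (g w : R) : R :=
  expR (- w `^ (- g^-1)) * (w `^ (- g^-1)) `^ (g + 1).

Section gev_density.
Variables (R : realType) (g0 m0 s0 : R).
Hypothesis s0_gt0 : 0 < s0.

Lemma gev_density_ge0 (x : R) : 0 <= gev_density g0 m0 s0 x.
Proof.
rewrite /gev_density; case: ifP => // _.
by rewrite !mulr_ge0 ?invr_ge0 ?powR_ge0 // ltW ?expR_gt0.
Qed.

Lemma one_add_gev_z (x : R) : 1 + g0 * ((x - m0) / s0) = (s0 + g0 * (x - m0)) / s0.
Proof. by field; rewrite gt_eqF. Qed.

Lemma gev_density_out (x : R) : s0 + g0 * (x - m0) <= 0 ->
  gev_density g0 m0 s0 x = 0.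
Proof.
move=> h; rewrite /gev_density /= one_add_gev_z ifF //.
by apply/negbTE; rewrite -leNgt ler_pdivrMr // mul0r.
Qed.

Lemma gev_densityE (x : R) : g0 != 0 -> 0 < s0 + g0 * (x - m0) ->
  gev_density g0 m0 s0 x = s0^-1 * gev_kernel g0 ((s0 + g0 * (x - m0)) / s0).
Proof.
move=> g0n h; rewrite /gev_density /= one_add_gev_z ifT ?divr_gt0 //.
by rewrite (negbTE g0n) -mulrA.
Qed.

Lemma gev_density_gumbelE (x : R) :
  gev_density 0 m0 s0 x =
  s0^-1 * (expR (- expR (- ((x - m0) / s0))) * expR (- ((x - m0) / s0))).
Proof.
rewrite /gev_density /= mul0r addr0 ifT ?ltr01 // eqxx add0r mulrA.
by rewrite powRr1 // ltW // expR_gt0.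
Qed.

Lemma gev_prob_le_integral (eps : R) (H : R -> \bar R) :
  (forall x, (0 <= H x)%E) ->
  (forall x, ~ Sbar g0 m0 s0 eps x -> ((gev_density g0 m0 s0 x)%:E <= H x)%E) ->
  (gev_prob g0 m0 s0 (~` Sbar g0 m0 s0 eps) <= \int[lebesgue_measure]_x H x)%E.
Proof.
move=> H0 HH; rewrite /gev_prob integral_mkcond.
apply: le_ge0_integralT => x; rewrite patchE; case: ifPn => hx //.
- by rewrite lee_fin gev_density_ge0.
- by apply: HH; move: hx; rewrite inE.
Qed.

End gev_density.

Section gev_shape_nonzero.
Variable R : realType.

Lemma gev_kernel_le_powR (g : R) : - (1 / 2) < g -> g != 0 ->
  exists K p : R,
    [/\ 0 < K, 1 < p & forall w, 0 < w -> gev_kernel g w <= K * w `^ p].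
Proof.
move=> gl; rewrite neq_lt => /orP[gn|gp]; rewrite /gev_kernel.
- (* g > -1/2 is exactly what makes this exponent exceed 1 *)
  exists 1, (- g^-1 - 1); split => //.
    have : 2 < (- g)^-1 by rewrite -div1r ltr_pdivlMr ?oppr_gt0 //; lra.
    by rewrite invrN; lra.
  move=> w w0; rewrite mul1r -powRrM.
  have -> : - g^-1 * (g + 1) = - g^-1 - 1 by field; rewrite lt_eqF.
  rewrite -[leRHS]mul1r; apply: ler_wpM2r; first exact: powR_ge0.
  by rewrite -expR0 ler_expR oppr_le0 powR_ge0.
- have [K K0 HK] := @powR_mul_expRN_bounded R (3 * g + 1) ltac:(lra).
  exists K, 2; split => //; first lra.
  move=> w w0; set u := w `^ (- g^-1).
  have u0 : 0 < u by exact: powR_gt0.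
  have uw : u `^ ((- g^-1)^-1 * 2) = w `^ 2.
    by rewrite /u -powRrM mulrA mulfV ?mul1r // oppr_eq0 invr_eq0 gt_eqF.
  have -> : g + 1 = (3 * g + 1) + (- g^-1)^-1 * 2 by field; rewrite gt_eqF.
  rewrite powRD; last by rewrite (gt_eqF u0) implybT.
  rewrite uw mulrA (mulrC (expR _)); apply: ler_wpM2r; first exact: powR_ge0.
  exact: HK.
Qed.

Lemma not_Sbar_boundary_le (g0 m0 s0 eps x : R) :
  0 < eps -> eps <= 1 -> eps <= `|g0| -> eps * (2 + `|g0|) < s0 ->
  ~ Sbar g0 m0 s0 eps x -> 0 < s0 + g0 * (x - m0) ->
  s0 + g0 * (x - m0) <= eps * (2 + `|g0| + s0 / `|g0|).
Proof.
move=> e0 e1 eg es nS ypos.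
have a0 : 0 < `|g0| by exact: lt_le_trans eg.
have hm := not_Sbar_margin e0 e1 nS.
(* x must lie on the side of m0 where the support ends *)
have t_lt : `|g0| * `|x - m0| < s0.
  rewrite -normrM; have [tpos|tneg] := leP 0 (g0 * (x - m0)).
  - exfalso; have : eps * `|x - m0| <= `|g0| * `|x - m0| by rewrite ler_wpM2r.
    by rewrite -normrM ger0_norm //; lra.
  - by rewrite ltr0_norm //; lra.
apply: le_trans hm _; apply: ler_wpM2l; first exact: ltW.
by rewrite lerD2l ler_pdivlMr // mulrC; exact: ltW.
Qed.

Lemma gev_density_le_box (g0 m0 s0 K p b x : R) :
  0 < s0 -> g0 != 0 -> 0 <= K -> 0 <= p ->
  (forall w, 0 < w -> gev_kernel g0 w <= K * w `^ p) ->
  (0 < s0 + g0 * (x - m0) -> s0 + g0 * (x - m0) <= b) ->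
  ((gev_density g0 m0 s0 x)%:E <=
   ((fun=> (s0^-1 * (K * (b / s0) `^ p))%:E)
      \_ [set` `[(m0 - s0 / g0 - b / `|g0|)%R, (m0 - s0 / g0 + b / `|g0|)%R]]) x)%E.
Proof.
move=> s0p g0n K0 p0 hK hb.
have box0 : (0 <= s0^-1 * (K * (b / s0) `^ p))%R.
  by rewrite mulr_ge0 ?invr_ge0 ?mulr_ge0 ?powR_ge0 ?(ltW s0p).
have [yle|ygt] := leP (s0 + g0 * (x - m0)) 0.
  by rewrite gev_density_out // patchE; case: ifP; rewrite lee_fin.
have {hb}yb := hb ygt.
have xin : [set` `[m0 - s0 / g0 - b / `|g0|, m0 - s0 / g0 + b / `|g0|]] x.
  rewrite /= in_itv /= -ler_distl.
  have -> : x - (m0 - s0 / g0) = (s0 + g0 * (x - m0)) / g0 by field.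
  by rewrite normrM normfV (gtr0_norm ygt) ler_pM2r ?invr_gt0 ?normr_gt0.
rewrite patchE mem_set // lee_fin gev_densityE //.
apply: ler_wpM2l; first by rewrite invr_ge0 ltW.
apply: le_trans (hK _ (divr_gt0 ygt s0p)) _.
apply: ler_wpM2l => //; apply: ge0_ler_powR => //; rewrite ?nnegrE.
- by rewrite divr_ge0 ?ltW.
- by rewrite divr_ge0 ?(ltW s0p) ?(le_trans (ltW ygt) yb).
- by rewrite ler_pM2r ?invr_gt0.
Qed.

Lemma gev_prob_not_Sbar_neq0 (g0 m0 s0 : R) :
  - (1 / 2) < g0 -> g0 != 0 -> 0 < s0 ->
  forall eta : R, 0 < eta -> exists delta : R, 0 < delta /\
    forall eps : R, 0 < eps -> eps < delta ->
      (gev_prob g0 m0 s0 (~` Sbar g0 m0 s0 eps) <= (eta * eps ^+ 2)%:E)%E.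
Proof.
move=> g0l g0n s0p.
have [K [p [K0 p1 hK]]] := gev_kernel_le_powR g0l g0n.
have p0 : 0 < p by lra.
have a0 : 0 < `|g0| by rewrite normr_gt0.
pose C := 2 + `|g0| + s0 / `|g0|.
have C0 : 0 < C by rewrite /C; have := divr_gt0 s0p a0; lra.
pose D := 2 * K * C * (C / s0) `^ p / (s0 * `|g0|).
have D0 : 0 < D by rewrite /D divr_gt0 ?mulr_gt0 ?powR_gt0 ?divr_gt0.
apply: (littleo_sq_of_powR
  (P := fun eps => gev_prob g0 m0 s0 (~` Sbar g0 m0 s0 eps))
  (eps0 := Num.min 1 (Num.min `|g0| (s0 / (2 + `|g0|)))) (D := D) (p := p - 1)).
- by rewrite !lt_min ltr01 a0 /=; apply: divr_gt0 => //; lra.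
- exact: D0.
- by rewrite subr_gt0.
move=> eps e0; rewrite !lt_min => /andP[e1 /andP[ea es]].
rewrite ltr_pdivlMr in es; last lra.
apply: le_trans (gev_prob_le_integral (eps := eps) s0p _
  (fun x nS => gev_density_le_box (b := eps * C) s0p g0n (ltW K0) (ltW p0) hK
     (not_Sbar_boundary_le e0 (ltW e1) (ltW ea) es nS))) _.
  by move=> x; rewrite patchE; case: ifP; rewrite lee_fin // mulr_ge0 ?invr_ge0
    ?mulr_ge0 ?powR_ge0 ?(ltW s0p) ?(ltW K0).
rewrite integral_indicator_itv; last 2 first.
- have : 0 < eps * C / `|g0| by rewrite divr_gt0 ?mulr_gt0.
  lra.
- by rewrite mulr_ge0 ?invr_ge0 ?mulr_ge0 ?powR_ge0 ?(ltW s0p) ?(ltW K0).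
rewrite lee_fin -(mulrA eps C) (powRM p (ltW e0) (divr_ge0 (ltW C0) (ltW s0p))).
rewrite -(mulr_powRB1 (ltW e0) p0).
rewrite [leLHS](_ : _ = D * eps `^ (p - 1) * eps ^+ 2) //.
by rewrite /D; field; rewrite ?g0n ?gt_eqF.
Qed.

End gev_shape_nonzero.

Section gev_shape_zero.
Variable R : realType.

Lemma gumbel_density_not_Sbar_le (m0 s0 eps x : R) :
  0 < s0 -> 0 < eps -> eps <= 1 -> ~ Sbar 0 m0 s0 eps x ->
  gev_density 0 m0 s0 x <=
  4 / s0 * expR ((`|m0| + 2) / (2 * s0)) * expR (- (2 * eps)^-1)
    * expR (- (`|x| / (2 * s0))).
Proof.
move=> s0p e0 e1 nS.
have hp := not_Sbar_margin e0 e1 nS.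
rewrite normr0 mul0r !addr0 in hp.
rewrite gev_density_gumbelE //; set z := (x - m0) / s0.
apply: le_trans (ler_wpM2l _ (gumbel_kernel_le z)) _; first by rewrite invr_ge0 ltW.
have key : - `|z| <= (`|m0| + 2) / (2 * s0) - (2 * eps)^-1 - `|x| / (2 * s0).
  have hz : `|z| = `|x - m0| / s0 by rewrite /z normrM normfV (gtr0_norm s0p).
  have tri : `|x| <= `|x - m0| + `|m0|.
    by have := ler_normD (x - m0) m0; rewrite subrK.
  have q : s0 / eps <= 2 + `|x - m0| by rewrite ler_pdivrMr // mulrC.
  have -> : (2 * eps)^-1 = s0 / eps / (2 * s0) by field; rewrite !gt_eqF.
  rewrite hz; move: (s0 / eps) q => Q q.
  have E : (`|m0| + 2) / (2 * s0) - Q / (2 * s0) - `|x| / (2 * s0) + `|x - m0| / s0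
           = (`|m0| + 2 - Q - `|x| + 2 * `|x - m0|) / (2 * s0).
    by field; rewrite gt_eqF.
  have : 0 <= (`|m0| + 2 - Q - `|x| + 2 * `|x - m0|) / (2 * s0).
    by apply: divr_ge0; lra.
  lra.
rewrite -ler_expR !expRD in key.
rewrite mulrA [s0^-1 * 4]mulrC -!mulrA.
do 2 (apply: ler_wpM2l; first by rewrite ?invr_ge0 ltW).
by rewrite mulrA.
Qed.

Lemma gev_prob_not_Sbar_eq0 (m0 s0 : R) : 0 < s0 ->
  forall eta : R, 0 < eta -> exists delta : R, 0 < delta /\
    forall eps : R, 0 < eps -> eps < delta ->
      (gev_prob 0 m0 s0 (~` Sbar 0 m0 s0 eps) <= (eta * eps ^+ 2)%:E)%E.
Proof.
move=> s0p.
pose G := expR ((`|m0| + 2) / (2 * s0)).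
have G0 : 0 < G by exact: expR_gt0.
apply: (littleo_sq_of_powR
  (P := fun eps => gev_prob 0 m0 s0 (~` Sbar 0 m0 s0 eps))
  (eps0 := 1) (D := 16 * G * 216) (p := 1)).
- exact: ltr01.
- by rewrite !mulr_gt0 // ltr0n.
- exact: ltr01.
move=> eps e0 e1.
pose A := 4 / s0 * G * expR (- (2 * eps)^-1).
have A0 : 0 <= A by apply/ltW; rewrite /A !mulr_gt0 ?invr_gt0 ?expR_gt0.
apply: le_trans (gev_prob_le_integral (eps := eps)
  (H := fun x => (A * expR (- (`|x| / (2 * s0))))%:E) s0p _ _) _.
- by move=> x; rewrite lee_fin mulr_ge0 // ltW // expR_gt0.
- move=> x nS; rewrite lee_fin.
  exact: gumbel_density_not_Sbar_le s0p e0 (ltW e1) nS.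
apply: le_trans (integral_laplace_le (c := 2 * s0) _ A0) _; first by rewrite mulr_gt0.
rewrite lee_fin powRr1; last exact: ltW.
have ht : expR (- (2 * eps)^-1) <= 216 * eps ^+ 3.
  have := @expRN_le_cube R (2 * eps)^-1 ltac:(by rewrite invr_gt0 mulr_gt0).
  rewrite exprVn invrK exprMn.
  have -> : (2 : R) ^+ 3 = 8 by rewrite -natrX.
  lra.
have -> : 2 * (A * (2 * s0)) = 16 * G * expR (- (2 * eps)^-1).
  by rewrite /A; field; rewrite gt_eqF.
have -> : 16 * G * 216 * eps * eps ^+ 2 = 16 * G * (216 * eps ^+ 3) by ring.
by apply: ler_wpM2l; rewrite // mulr_ge0 // ltW.
Qed.

End gev_shape_zero.

Theorem lemmaE1 (R : realType) (g0 m0 s0 : R) :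
  - (1 / 2) < g0 -> 0 < s0 ->
  forall eta : R, 0 < eta ->
  exists delta : R, 0 < delta /\
    forall eps : R, 0 < eps -> eps < delta ->
      (gev_prob g0 m0 s0 (~` Sbar g0 m0 s0 eps) <= (eta * eps ^+ 2)%:E)%E.
Proof.
move=> g0l s0p; case: (eqVneq g0 0) => [->|g0n].
- exact: gev_prob_not_Sbar_eq0.
- exact: gev_prob_not_Sbar_neq0.
Qed.
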